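(* Consider the model in the context with $\bar e=0$. For $\mathcal U\subseteq\mathcal U_0$ and $\mathcal C\subseteq\mathcal C_0$ define $f(\mathcal U,\mathcal C)$ as follows: if $|\mathcal C|\ge K$, $f(\mathcal U,\mathcal C)=\max_R E(\mathcal U,\mathcal C,R)$, the maximum over all recommendations $R$ such that $(\mathcal U,\mathcal C)$ is a stable set with recommendation $R$ (undefined if no such $R$ exists); if $|\mathcal C|<K$, $f(\mathcal U,\mathcal C)$ is defined in the same way but in the modified instance where each user receives exactly $|\mathcal C|$ recommendations instead of $K$. Then for every $\mathcal U\subseteq\mathcal U_0$, all $c_0,c_1\in\mathcal C_0$ and every $\mathcal C\subseteq\mathcal C_0\setminus\{c_0,c_1\}$, $$f(\mathcal U,\mathcal C\cup\{c_0,c_1\})-f(\mathcal U,\mathcal C\cup\{c_1\})\le f(\mathcal U,\mathcal C\cup\{c_0\})-f(\mathcal U,\mathcal C),$$ whenever all four terms are well-defined. This holds for every value of $K$.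
   Context: An instance consists of a dimension $D\ge 1$, users $\mathcal U_0=\{1,\dots,U\}$ with types $u_i\in\mathbb R^D_{\ge0}$, creators $\mathcal C_0=\{1,\dots,C\}$ with types $c_j\in\mathbb R^D_{\ge 0}$, all types of Euclidean norm $1$, a positive integer $K$, a creator threshold $\bar a\in\mathbb N_0$ and a user threshold $\bar e\in[0,1]$. For $\mathcal U\subseteq\mathcal U_0$, $\mathcal C\subseteq\mathcal C_0$, a recommendation $R$ assigns to each $i\in\mathcal U$ a set $R(i)\subseteq\mathcal C$; its total engagement is $E(\mathcal U,\mathcal C,R)=\sum_{i\in\mathcal U}\sum_{j\in R(i)}u_i^Tc_j$. The pair $(\mathcal U,\mathcal C)$ is a stable set with recommendation $R$ if $|R(i)|=K$ and $u_i^Tc_j\ge\bar e$ for all $i\in\mathcal U$, $j\in R(i)$, and $|\{i\in\mathcal U: j\in R(i)\}|\ge\bar a$ for every $j\in\mathcal C$. *)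

From HB Require Import structures.
From mathcomp Require Import all_boot all_order all_algebra.
From mathcomp Require Import reals.
Set Implicit Arguments. Unset Strict Implicit. Unset Printing Implicit Defensive.
Import Order.TTheory GRing.Theory Num.Theory.
Local Open Scope ring_scope.

Section Model.
Variables (R : realType) (D nU nC : nat).

Definition dot (x y : 'I_D -> R) : R := \sum_(d < D) x d * y d.

Definition sqnorm (x : 'I_D -> R) : R := dot x x.

Definition engagement (u : 'I_nU -> 'I_D -> R) (c : 'I_nC -> 'I_D -> R)
    (US : {set 'I_nU}) (Rc : 'I_nU -> {set 'I_nC}) : R :=
  \sum_(i in US) \sum_(j in Rc i) dot (u i) (c j).

Definition stable_with (k : nat) (ebar : R) (abar : nat)
    (u : 'I_nU -> 'I_D -> R) (c : 'I_nC -> 'I_D -> R)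
    (US : {set 'I_nU}) (CS : {set 'I_nC}) (Rc : 'I_nU -> {set 'I_nC}) : Prop :=
  (forall i, i \in US ->
      [/\ Rc i \subset CS, #|Rc i| = k &
          forall j, j \in Rc i -> ebar <= dot (u i) (c j)]) /\
  (forall j, j \in CS -> (abar <= #|[set i in US | j \in Rc i]|)%N).

(* f_value K ebar abar u c US CS v  :<->  f(US,CS) is well-defined and equals v:
   v is the maximum of E(US,CS,Rc) over all Rc making (US,CS) stable, where each
   user receives min(K, |CS|) recommendations. *)
Definition f_value (K : nat) (ebar : R) (abar : nat)
    (u : 'I_nU -> 'I_D -> R) (c : 'I_nC -> 'I_D -> R)
    (US : {set 'I_nU}) (CS : {set 'I_nC}) (v : R) : Prop :=
  (exists Rc, stable_with (minn K #|CS|) ebar abar u c US CS Rc /\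
              engagement u c US Rc = v) /\
  (forall Rc, stable_with (minn K #|CS|) ebar abar u c US CS Rc ->
              engagement u c US Rc <= v).

End Model.

From HB Require Import structures.
From mathcomp Require Import all_boot all_order all_algebra.
From mathcomp Require Import reals.
From mathcomp Require Import zify lra.
Set Implicit Arguments. Unset Strict Implicit. Unset Printing Implicit Defensive.
Import Order.TTheory GRing.Theory Num.Theory.

(* Let A be an optimal recommendation for C + {c0, c1} and B one for C. It
   suffices to redistribute, user by user, the multiset A(i) + B(i) into two
   stable recommendations P(i) of C + {c0} and Q(i) of C + {c1}, since then
   E(A) + E(B) = E(P) + E(Q) <= f(C + {c0}) + f(C + {c1}).
   If K <= |C|, first swap c1 out of each A(i) against some t in B(i) \ A(i).
   The creators of C whose audience under P or Q is below abar are then repaired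
   by exchanges along alternating paths (z in Q(i) \ P(i) against
   t in P(i) \ Q(i)), each lowering the total deficit.  If no such path from a
   deficient creator j0 ends at a creator with audience above abar, the set Z
   of creators reachable from j0 is closed under exchanges, and counting
   memberships user by user gives sum_Z audience_A <= sum_Z audience_P
   < |Z| abar, contradicting the stability of A.
   If |C| < K, then B(i) = C for every user, and recommending all of C + {c0}
   and all of C + {c1} to everybody is stable and, engagements being
   nonnegative, at least as good. *)

Section Exchange.
Variables (T V : finType) (US : {set T}).
Implicit Types (X Y : T -> {set V}) (i : T) (j x t : V).

Definition exchange (x t : V) (S : {set V}) : {set V} := x |: (S :\ t).

Lemma card_exchange (x t : V) (S : {set V}) :
  x \notin S -> t \in S -> #|exchange x t S| = #|S|.
Proof.
by move=> xS tS; rewrite cardsU1 in_setD1 (negbTE xS) andbF (cardsD1 t S) tS.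
Qed.

Lemma in_exchange (x t : V) (S : {set V}) j :
  x \notin S -> t \in S -> (j \in exchange x t S) + (j == t) = (j \in S) + (j == x).
Proof.
move=> xS tS; have xt : x != t by apply: contraNneq xS => ->.
rewrite in_setU1 in_setD1; case: (eqVneq j x) => [->|jx]; first by rewrite (negbTE xS) (negbTE xt).
by case: (eqVneq j t) => [->|jt]; rewrite ?tS.
Qed.

Definition audience (X : T -> {set V}) (j : V) : nat := #|[set i in US | j \in X i]|.

Lemma audience_sum X j : audience X j = \sum_(i in US) (j \in X i).
Proof.
rewrite /audience -sum1_card big_mkcond [RHS]big_mkcond /=.
by apply: eq_bigr => i _; rewrite inE; case: (i \in US); case: (j \in X i).
Qed.

Definition exchange_at (i0 : T) (x t : V) (X : T -> {set V}) (i : T) : {set V} :=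
  if i == i0 then exchange x t (X i) else X i.

Lemma in_exchange_at (i0 : T) x t X i j : x \notin X i0 -> t \in X i0 ->
  (j \in exchange_at i0 x t X i) + ((i == i0) && (j == t))
  = (j \in X i) + ((i == i0) && (j == x)).
Proof.
by rewrite /exchange_at; case: eqP => [-> | _] xX tX; [apply: in_exchange | rewrite !addn0].
Qed.

Lemma exchange_at_keep (i0 : T) x t X i j :
  j != t -> j \in X i -> j \in exchange_at i0 x t X i.
Proof. by move=> jt jX; rewrite /exchange_at; case: ifP; rewrite // !inE jt jX orbT. Qed.

Lemma exchange_at_avoid (i0 : T) x t X i j :
  j != x -> j \notin X i -> j \notin exchange_at i0 x t X i.
Proof.
move=> jx jX; rewrite /exchange_at; case: ifP => // _.
by rewrite !inE negb_or jx negb_and (negbTE jX) orbT.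
Qed.

Lemma audience_exchange_at (i0 : T) x t X j : i0 \in US -> x \notin X i0 -> t \in X i0 ->
  audience (exchange_at i0 x t X) j + (j == t) = audience X j + (j == x).
Proof.
move=> i0U xX tX; have pick_i0 b : \sum_(i in US) ((i == i0) && b) = b.
  by rewrite (bigD1 i0) //= eqxx big1 ?addn0 // => i /andP[_ /negbTE->].
rewrite !audience_sum -(pick_i0 (j == t)) -(pick_i0 (j == x)) -!big_split /=.
by apply: eq_bigr => i _; apply: in_exchange_at.
Qed.

Variable CS : {set V}.

Definition exchange_edge X Y : rel V := fun z t =>
  [exists i in US, [&& z \in Y i, z \notin X i, t \in X i, t \notin Y i & t \in CS]].

Definition reshuffle X Y X' Y' : Prop :=
  [/\ forall i j, (j \in X' i) + (j \in Y' i) = (j \in X i) + (j \in Y i),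
      forall i, #|X' i| = #|X i| /\ #|Y' i| = #|Y i| &
      forall i j, j \notin CS -> (j \in X' i) = (j \in X i)].

Lemma reshuffle_trans X Y X1 Y1 X2 Y2 :
  reshuffle X Y X1 Y1 -> reshuffle X1 Y1 X2 Y2 -> reshuffle X Y X2 Y2.
Proof.
move=> [m1 c1 o1] [m2 c2 o2]; split=> [i j | i | i j jC]; first by rewrite m2 m1.
  by rewrite (c2 i).1 (c2 i).2 (c1 i).1 (c1 i).2.
by rewrite o2 // o1.
Qed.

Lemma reshuffle_outside X Y X' Y' i j : reshuffle X Y X' Y' -> j \notin CS ->
  (j \in X' i) = (j \in X i) /\ (j \in Y' i) = (j \in Y i).
Proof.
move=> [m _ o] jC; split; first exact: o.
by have := m i j; rewrite o //; case: (j \in Y' i); case: (j \in Y i); lia.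
Qed.

Lemma reshuffle_subset X Y X' Y' i (S S' : {set V}) : reshuffle X Y X' Y' ->
  CS \subset S -> CS \subset S' -> X i \subset S -> Y i \subset S' ->
  X' i \subset S /\ Y' i \subset S'.
Proof.
move=> r CS_S CS_S' XS YS'; split; apply/subsetP=> j jX';
  have [jC | jC] := boolP (j \in CS).
- exact: (subsetP CS_S).
- by apply: (subsetP XS); rewrite -(reshuffle_outside i r jC).1.
- exact: (subsetP CS_S').
- by apply: (subsetP YS'); rewrite -(reshuffle_outside i r jC).2.
Qed.

Lemma reshuffle_swap X Y X' Y' : reshuffle X Y X' Y' -> reshuffle Y X Y' X'.
Proof.
move=> r; have [m c _] := r; split=> [i j | i | i j jC].
- by rewrite addnC m addnC.
- by rewrite (c i).1 (c i).2.
- by have [] := reshuffle_outside i r jC.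
Qed.

Lemma audience_reshuffle X Y X' Y' j : reshuffle X Y X' Y' ->
  audience X' j + audience Y' j = audience X j + audience Y j.
Proof.
by move=> [m _ _]; rewrite !audience_sum -!big_split; apply: eq_bigr => i _; apply: m.
Qed.

Lemma reshuffle_exchange_at X Y i0 x t : x \in CS -> t \in CS ->
  x \in Y i0 -> x \notin X i0 -> t \in X i0 -> t \notin Y i0 ->
  reshuffle X Y (exchange_at i0 x t X) (exchange_at i0 t x Y).
Proof.
move=> xC tC xY xX tX tY; split=> [i j | i | i j jC].
- have := in_exchange_at i j xX tX; have := in_exchange_at i j tY xY; lia.
- by rewrite /exchange_at; case: ifP => // /eqP->; rewrite !card_exchange.
- have jx : j != x by apply: contraNneq jC => ->.
  have jt : j != t by apply: contraNneq jC => ->.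
  by rewrite /exchange_at; case: ifP; rewrite // !inE (negbTE jx) jt.
Qed.

Lemma exchange_at_path X Y i0 x t a q :
  path (exchange_edge X Y) a q -> x \notin a :: q -> t \notin q ->
  path (exchange_edge (exchange_at i0 x t X) (exchange_at i0 t x Y)) a q.
Proof.
elim: q a => [//|b q IH] a /= /andP[ab abq].
rewrite !inE !negb_or => /and3P[xa xb xq] /andP[tb tq].
apply/andP; split; last by apply: IH; rewrite // inE negb_or xb.
move: xa xb tb; rewrite ![x == _]eq_sym [t == _]eq_sym => ax bx bt.
case/exists_inP: ab => i iU /and5P[aY aX bX bY bC].
apply/exists_inP; exists i => //; apply/and5P; split=> //.
- exact: exchange_at_keep.
- exact: exchange_at_avoid.
- exact: exchange_at_keep.
- exact: exchange_at_avoid.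
Qed.

Lemma exchange_along_path X Y x p :
  x \in CS -> path (exchange_edge X Y) x p -> uniq (x :: p) ->
  exists X' Y', reshuffle X Y X' Y' /\
    forall j, audience X' j + (j == last x p) = audience X j + (j == x).
Proof.
elim: p x X Y => [|t p IH] x X Y xC /=; first by exists X, Y.
case/andP=> /exists_inP[i0 i0U /and5P[xY xX tX tY tC]] tp /andP[xtp utp].
have tp' := exchange_at_path i0 tp xtp (andP utp).1.
have [X' [Y' [r au]]] := IH t _ _ tC tp' utp.
exists X', Y'; split; first by apply: reshuffle_trans r; apply: reshuffle_exchange_at.
by move=> j; rewrite au audience_exchange_at.
Qed.

Lemma sum_audience X (Z : {set V}) :
  \sum_(z in Z) audience X z = \sum_(i in US) #|X i :&: Z|.
Proof.
under eq_bigr do rewrite audience_sum; rewrite exchange_big /=.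
apply: eq_bigr => i _; rewrite -sum1_card big_mkcond [RHS]big_mkcond /=.
by apply: eq_bigr => z _; rewrite inE andbC; case: (z \in Z); case: (z \in X i).
Qed.

Lemma card_closedI_le (Xi Yi Ai Bi Z : {set V}) :
  #|Xi| = #|Ai| -> Bi \subset CS ->
  (forall j, (j \in Xi) + (j \in Yi) = (j \in Ai) + (j \in Bi)) ->
  (forall z t, z \in Z -> z \in Yi -> z \notin Xi -> t \in Xi -> t \notin Yi -> t \in CS ->
     t \in Z) ->
  #|Ai :&: Z| <= #|Xi :&: Z|.
Proof.
move=> cXA BC m closed.
have [z0 /andP[/andP[z0Z z0Y] z0X] | noentry] :=
  pickP [pred z | (z \in Z) && (z \in Yi) && (z \notin Xi)]; last first.
  apply/subset_leq_card/subsetP => j; rewrite !inE => /andP[jA jZ]; rewrite jZ andbT.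
  have := noentry j; have := m j; rewrite /= jZ jA.
  by case: (j \in Xi); case: (j \in Yi).
suff: #|Xi :\: Z| <= #|Ai :\: Z|.
  by have := cardsID Z Xi; have := cardsID Z Ai; rewrite cXA; lia.
apply/subset_leq_card/subsetP => j; rewrite !inE => /andP[jZ jX]; rewrite jZ /=.
have := m j; rewrite jX; case: (boolP (j \in Yi)) => jY.
  by case: (j \in Ai); case: (j \in Bi).
have jC : j \notin CS by apply: contra jZ; apply: closed z0Y z0X jX jY.
by rewrite (negbTE (contraNN (subsetP BC j) jC)); case: (j \in Ai).
Qed.

Section Balance.
Variables (A B : T -> {set V}) (abar : nat).
Hypothesis B_sub : forall i, i \in US -> B i \subset CS.
Hypothesis A_audience : forall j, j \in CS -> abar <= audience A j.
Hypothesis B_audience : forall j, j \in CS -> abar <= audience B j.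

Definition split_of X Y : Prop := forall i, i \in US ->
  [/\ #|X i| = #|A i|, #|Y i| = #|A i| &
      forall j, (j \in X i) + (j \in Y i) = (j \in A i) + (j \in B i)].

Lemma split_of_swap X Y : split_of X Y -> split_of Y X.
Proof. by move=> s i /s[cX cY m]; split=> // j; rewrite addnC m. Qed.

Lemma split_of_reshuffle X Y X' Y' : reshuffle X Y X' Y' -> split_of X Y -> split_of X' Y'.
Proof.
by move=> [m c _] s i /s[cX cY mXY]; split=> [||j]; rewrite ?(c i).1 ?(c i).2 ?m.
Qed.

Lemma audience_split X Y j : split_of X Y ->
  audience X j + audience Y j = audience A j + audience B j.
Proof.
by move=> s; rewrite !audience_sum -!big_split; apply: eq_bigr => i /s[_ _ m]; apply: m.
Qed.

Lemma audience_closed_le X Y (Z : {set V}) : split_of X Y ->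
  (forall z t, z \in Z -> exchange_edge X Y z t -> t \in Z) ->
  \sum_(z in Z) audience A z <= \sum_(z in Z) audience X z.
Proof.
move=> s closed; rewrite !sum_audience; apply: leq_sum => i iU.
have [cX _ m] := s i iU; apply: card_closedI_le cX (B_sub iU) m _.
move=> z t zZ zY zX tX tY tC; apply: closed zZ _.
by apply/exists_inP; exists i; rewrite // zY zX tX tY tC.
Qed.

(* truncated subtraction: only the shortfall below [abar] counts *)
Definition deficit X Y : nat :=
  \sum_(j in CS) ((abar - audience X j) + (abar - audience Y j)).

Lemma deficit_swap X Y : deficit X Y = deficit Y X.
Proof. by apply: eq_bigr => j _; rewrite addnC. Qed.

Lemma deficit_shift X Y X' Y' x z : x \in CS ->
  audience X x < abar -> abar < audience X z -> abar.*2 <= audience X x + audience Y x ->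
  (forall j, audience X' j + audience Y' j = audience X j + audience Y j) ->
  (forall j, audience X' j + (j == z) = audience X j + (j == x)) ->
  deficit X' Y' < deficit X Y.
Proof.
move=> xC ltx ltz bal sum shift.
have xz : x != z by apply: contraTneq ltz => <-; rewrite -leqNgt ltnW.
rewrite /deficit (bigD1 x xC) [X in _ < X](bigD1 x xC) /= -addSn.
apply: leq_add.
  by have := shift x; have := sum x; rewrite eqxx (negbTE xz); lia.
apply: leq_sum => j /andP[_ jx]; have := shift j; have := sum j; rewrite (negbTE jx).
by case: (eqVneq j z) => [->|_]; lia.
Qed.

Lemma reshuffle_deficit_lt X Y j0 : split_of X Y -> j0 \in CS -> audience X j0 < abar ->
  exists X' Y', reshuffle X Y X' Y' /\ deficit X' Y' < deficit X Y.
Proof.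
move=> s j0C ltj0.
pose Z := [set z in CS | connect (exchange_edge X Y) j0 z].
case: (boolP [exists z in Z, abar < audience X z]) => [/exists_inP[z zZ ltz] | ].
  move: zZ ltz; rewrite inE => /andP[_ /connectP[p + ->]].
  case/shortenP=> p' p'path p'uniq _ ltz.
  have [X' [Y' [r shift]]] := exchange_along_path j0C p'path p'uniq.
  exists X', Y'; split=> //; apply: deficit_shift shift => //.
  - by rewrite (audience_split j0 s) -(addnn abar) leq_add ?A_audience ?B_audience.
  - by move=> j; apply: audience_reshuffle.
move/exists_inPn=> satZ; exfalso.
have closed z t : z \in Z -> exchange_edge X Y z t -> t \in Z.
  rewrite !inE => /andP[_ j0z] zt; have := zt; case/exists_inP=> i _ /and5P[_ _ _ _ ->].
  by rewrite (connect_trans j0z) ?connect1.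
have j0Z : j0 \in Z by rewrite inE j0C connect0.
have : \sum_(z in Z) audience X z < \sum_(z in Z) abar.
  rewrite (bigD1 j0 j0Z) [X in _ < X](bigD1 j0 j0Z) /= -addSn leq_add //.
  by apply: leq_sum => z /andP[zZ _]; rewrite leqNgt satZ.
apply/negP; rewrite -leqNgt (leq_trans _ (audience_closed_le s closed)) //.
by apply: leq_sum => z; rewrite inE => /andP[zC _]; apply: A_audience.
Qed.

Lemma reshuffle_balanced X Y : split_of X Y ->
  exists X' Y', reshuffle X Y X' Y' /\
    forall j, j \in CS -> abar <= audience X' j /\ abar <= audience Y' j.
Proof.
have [n] := ubnP (deficit X Y); elim: n X Y => // n IH X Y ltn s.
have [j0 /andP[j0C short] | full] := pickP [pred j | (j \in CS) &&
    ((audience X j < abar) || (audience Y j < abar))]; last first.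
  exists X, Y; split=> // j jC; have := full j; rewrite /= jC /=.
  by move/negbT; rewrite negb_or -!leqNgt => /andP[].
have [X' [Y' [r lt]]] : exists X' Y', reshuffle X Y X' Y' /\ deficit X' Y' < deficit X Y.
  case/orP: short => short; first exact: reshuffle_deficit_lt s j0C short.
  have [Y' [X' [r lt]]] := reshuffle_deficit_lt (split_of_swap s) j0C short.
  exists X', Y'; rewrite deficit_swap [deficit X Y]deficit_swap.
  by split=> //; apply: reshuffle_swap.
have [X'' [Y'' [r' bal]]] := IH X' Y' (leq_trans lt ltn) (split_of_reshuffle r s).
by exists X'', Y''; split=> //; apply: reshuffle_trans r'.
Qed.

End Balance.


Lemma audience_forced (A B X Y : T -> {set V}) j : split_of A B X Y ->
  (forall i, i \in US -> j \notin Y i) -> (forall i, i \in US -> j \notin B i) ->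
  audience X j = audience A j.
Proof.
move=> s jY jB; rewrite !audience_sum; apply: eq_bigr => i iU.
by have [_ _ /(_ j)] := s i iU; rewrite (negbTE (jY i iU)) (negbTE (jB i iU)) !addn0.
Qed.

Lemma split_user (c0 c1 : V) (Ai Bi : {set V}) : c1 \notin CS ->
  Ai \subset c0 |: (c1 |: CS) -> Bi \subset CS -> #|Bi| = #|Ai| ->
  exists PQ : {set V} * {set V}, [/\ PQ.1 \subset c0 |: CS, PQ.2 \subset c1 |: CS,
    #|PQ.1| = #|Ai|, #|PQ.2| = #|Ai| &
    forall j, (j \in PQ.1) + (j \in PQ.2) = (j \in Ai) + (j \in Bi)].
Proof.
move=> c1C AC BC cBA; have c1B : c1 \notin Bi by apply: contra c1C; apply: (subsetP BC).
have A_c0C j : j \in Ai -> j != c1 -> j \in c0 |: CS.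
  by move=> /(subsetP AC); rewrite !inE => + /negbTE jc1; rewrite jc1.
have [c1A | c1A] := boolP (c1 \in Ai); last first.
  exists (Ai, Bi); split=> //=; last by apply/subsetP=> j /(subsetP BC) jC; rewrite !inE jC orbT.
  by apply/subsetP=> j jA; apply: A_c0C (memPn c1A j jA).
have /subsetPn[t tB tA] : ~~ (Bi \subset Ai).
  apply/negP=> BA; have /eqP BiAi : Bi == Ai by rewrite eqEcard BA cBA leqnn.
  by rewrite BiAi c1A in c1B.
exists (exchange t c1 Ai, exchange c1 t Bi); split=> /=.
- apply/subsetP=> j /setU1P[-> | /setD1P[jc1 jA]]; last exact: A_c0C.
  by rewrite inE (subsetP BC) ?orbT.
- by apply/subsetP=> j; rewrite !inE => /orP[-> // | /andP[_ /(subsetP BC) ->]]; rewrite orbT.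
- exact: card_exchange.
- by rewrite card_exchange.
- by move=> j; have := in_exchange j tA c1A; have := in_exchange j c1B tB; lia.
Qed.

Lemma forced_split (A B : T -> {set V}) (c0 c1 : V) (abar : nat) :
  c0 \notin CS -> c1 \notin CS -> c0 != c1 ->
  (forall i, i \in US -> A i \subset c0 |: (c1 |: CS)) ->
  (forall i, i \in US -> B i \subset CS /\ #|B i| = #|A i|) ->
  (forall j, j \in c0 |: (c1 |: CS) -> abar <= audience A j) ->
  (forall j, j \in CS -> abar <= audience B j) ->
  exists P Q, [/\ split_of A B P Q,
    forall i, i \in US -> P i \subset c0 |: CS /\ Q i \subset c1 |: CS,
    forall j, j \in c0 |: CS -> abar <= audience P j &
    forall j, j \in c1 |: CS -> abar <= audience Q j].
Proof.
move=> c0C c1C c01 AC BC A_aud B_aud.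
have /fin_all_exists[PQ PQ_spec] : forall i, exists PQ : {set V} * {set V}, i \in US ->
    [/\ PQ.1 \subset c0 |: CS, PQ.2 \subset c1 |: CS, #|PQ.1| = #|A i|, #|PQ.2| = #|A i| &
        forall j, (j \in PQ.1) + (j \in PQ.2) = (j \in A i) + (j \in B i)].
  move=> i; have [iU | iU] := boolP (i \in US); last by exists (A i, B i).
  by have [BCi cB] := BC i iU; have [PQi] := split_user c1C (AC i iU) BCi cB; exists PQi.
have s0 : split_of A B (fun i => (PQ i).1) (fun i => (PQ i).2).
  by move=> i /PQ_spec[].
have A_audC j : j \in CS -> abar <= audience A j by move=> jC; rewrite A_aud // !inE jC !orbT.
have [P [Q [r bal]]] := reshuffle_balanced (fun i iU => (BC i iU).1) A_audC B_aud s0.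
have s := split_of_reshuffle r s0.
have PQC i : i \in US -> P i \subset c0 |: CS /\ Q i \subset c1 |: CS.
  move=> iU; have [P0C Q0C _ _ _] := PQ_spec i iU.
  by apply: reshuffle_subset r _ _ P0C Q0C; apply: subsetUr.
have BC' i : i \in US -> B i \subset CS by move=> /BC[].
exists P, Q; split=> // j /setU1P[-> | jC].
- rewrite (audience_forced s) ?A_aud ?setU11 // => i iU.
    by apply: (contra (subsetP (PQC i iU).2 c0)); rewrite !inE negb_or c01.
  exact: contra (subsetP (BC' i iU) c0) c0C.
- exact: (bal j jC).1.
- rewrite (audience_forced (split_of_swap s)) ?A_aud ?inE ?eqxx ?orbT // => i iU.
    by apply: (contra (subsetP (PQC i iU).1 c1)); rewrite !inE negb_or eq_sym c01.
  exact: contra (subsetP (BC' i iU) c1) c1C.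
- exact: (bal j jC).2.
Qed.

End Exchange.

Local Open Scope ring_scope.

Lemma sum_set_mulrn (V : finType) (M : nmodType) (w : V -> M) (S : {set V}) :
  \sum_(j in S) w j = \sum_j w j *+ (j \in S).
Proof. by rewrite big_mkcond; apply: eq_bigr => j _; case: (j \in S). Qed.

Lemma sum_set_count (V : finType) (M : nmodType) (w : V -> M) (S1 S2 S3 S4 : {set V}) :
  (forall j, (j \in S1) + (j \in S2) = (j \in S3) + (j \in S4))%N ->
  \sum_(j in S1) w j + \sum_(j in S2) w j = \sum_(j in S3) w j + \sum_(j in S4) w j.
Proof.
move=> count; rewrite !sum_set_mulrn -!big_split /=.
by apply: eq_bigr => j _; rewrite -!mulrnDr count.
Qed.

Lemma ler_sum_subset (V : finType) (R : numDomainType) (w : V -> R) (S1 S2 : {set V}) :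
  S1 \subset S2 -> (forall j, j \in S2 -> 0 <= w j) ->
  \sum_(j in S1) w j <= \sum_(j in S2) w j.
Proof.
move=> S12 w_ge0; rewrite [X in _ <= X](big_setID S1) /= (setIidPr S12) lerDl.
by apply: sumr_ge0 => j /setDP[/w_ge0].
Qed.

Section Model.
Variables (R : realType) (D nU nC : nat).
Variables (u : 'I_nU -> 'I_D -> R) (c : 'I_nC -> 'I_D -> R).
Hypothesis u_ge0 : forall i d, 0 <= u i d.
Hypothesis c_ge0 : forall j d, 0 <= c j d.
Implicit Types (US : {set 'I_nU}) (CS S : {set 'I_nC}) (A B P Q : 'I_nU -> {set 'I_nC}).

Lemma dot_ge0 i j : 0 <= dot (u i) (c j).
Proof. by apply: sumr_ge0 => d _; apply: mulr_ge0. Qed.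

Lemma stable_with0E k abar US CS Rc :
  stable_with k 0 abar u c US CS Rc <->
  (forall i, i \in US -> Rc i \subset CS /\ #|Rc i| = k) /\
  (forall j, j \in CS -> (abar <= audience US Rc j)%N).
Proof.
split=> [[hR haud] | [hR haud]]; split=> // i /hR; first by case.
by case=> RC cR; split=> // j _; apply: dot_ge0.
Qed.

Lemma engagement_split US (A B P Q : 'I_nU -> {set 'I_nC}) :
  split_of US A B P Q ->
  engagement u c US P + engagement u c US Q = engagement u c US A + engagement u c US B.
Proof.
move=> s; rewrite /engagement -!big_split /=; apply: eq_bigr => i iU.
by have [_ _ count] := s i iU; apply: sum_set_count.
Qed.

Lemma stable_exchange_split US CS (c0 c1 : 'I_nC) k abar A B :
  c0 != c1 -> c0 \notin CS -> c1 \notin CS ->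
  stable_with k 0 abar u c US (c0 |: (c1 |: CS)) A -> stable_with k 0 abar u c US CS B ->
  exists P Q, [/\ stable_with k 0 abar u c US (c0 |: CS) P,
    stable_with k 0 abar u c US (c1 |: CS) Q &
    engagement u c US A + engagement u c US B = engagement u c US P + engagement u c US Q].
Proof.
move=> c01 c0C c1C /stable_with0E[AC A_aud] /stable_with0E[BC B_aud].
have BC' i : i \in US -> B i \subset CS /\ #|B i| = #|A i|.
  by move=> iU; rewrite (BC i iU).2 (AC i iU).2; split; first by case: (BC i iU).
have [P [Q [s PQC P_aud Q_aud]]] :=
  forced_split c0C c1C c01 (fun i iU => (AC i iU).1) BC' A_aud B_aud.
exists P, Q; split; last by rewrite (engagement_split s).
- apply/stable_with0E; split=> // i iU.
  by have [cP _ _] := s i iU; rewrite cP (AC i iU).2; split=> //; case: (PQC i iU).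
- apply/stable_with0E; split=> // i iU.
  by have [_ cQ _] := s i iU; rewrite cQ (AC i iU).2; split=> //; case: (PQC i iU).
Qed.

Lemma stable_full US S abar :
  (abar <= #|US|)%N -> stable_with #|S| 0 abar u c US S (fun=> S).
Proof.
move=> le_abar; apply/stable_with0E; split=> // j jS; apply: (leq_trans le_abar).
by apply/subset_leq_card/subsetP => i iU; rewrite inE iU jS.
Qed.

Lemma stable_exchange_full US CS (c0 c1 : 'I_nC) k abar A B :
  c0 != c1 -> c0 \notin CS -> c1 \notin CS ->
  stable_with k 0 abar u c US (c0 |: (c1 |: CS)) A ->
  stable_with #|CS| 0 abar u c US CS B ->
  [/\ stable_with #|c0 |: CS| 0 abar u c US (c0 |: CS) (fun=> c0 |: CS),
    stable_with #|c1 |: CS| 0 abar u c US (c1 |: CS) (fun=> c1 |: CS) &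
    engagement u c US A + engagement u c US B <=
    engagement u c US (fun=> c0 |: CS) + engagement u c US (fun=> c1 |: CS)].
Proof.
move=> c01 c0C c1C /stable_with0E[AC A_aud] /stable_with0E[BC _].
have le_abar : (abar <= #|US|)%N.
  apply: leq_trans (A_aud c0 (setU11 _ _)) _.
  by apply/subset_leq_card/subsetP => i; rewrite inE => /andP[].
split; try exact: stable_full.
rewrite /engagement -!big_split /=; apply: ler_sum => i iU.
have [BCi cB] := BC i iU.
have -> : B i = CS by apply/eqP; rewrite eqEcard BCi cB leqnn.
have c0C' : c0 \notin c1 |: CS by rewrite !inE negb_or c01.
have := ler_sum_subset (AC i iU).1 (fun j _ => dot_ge0 i j).
by rewrite !big_setU1 //=; lra.
Qed.

Lemma stable_exchange US CS (c0 c1 : 'I_nC) K abar A B :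
  c0 != c1 -> c0 \notin CS -> c1 \notin CS ->
  stable_with (minn K #|c0 |: (c1 |: CS)|) 0 abar u c US (c0 |: (c1 |: CS)) A ->
  stable_with (minn K #|CS|) 0 abar u c US CS B ->
  exists P Q, [/\ stable_with (minn K #|c0 |: CS|) 0 abar u c US (c0 |: CS) P,
    stable_with (minn K #|c1 |: CS|) 0 abar u c US (c1 |: CS) Q &
    engagement u c US A + engagement u c US B <= engagement u c US P + engagement u c US Q].
Proof.
move=> c01 c0C c1C sA sB.
have c0C' : c0 \notin c1 |: CS by rewrite !inE negb_or c01.
have card0 : #|c0 |: CS| = #|CS|.+1 by rewrite cardsU1 c0C.
have card1 : #|c1 |: CS| = #|CS|.+1 by rewrite cardsU1 c1C.
have card01 : #|c0 |: (c1 |: CS)| = #|CS|.+2 by rewrite cardsU1 c0C' card1.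
rewrite card01 in sA; have [KC | CK] := leqP K #|CS|.
  have [mK mK1 mK2] : [/\ minn K #|CS| = K, minn K #|CS|.+1 = K & minn K #|CS|.+2 = K].
    by split; lia.
  rewrite mK2 in sA; rewrite mK in sB; rewrite card0 card1 mK1.
  have [P [Q [sP sQ ->]]] := stable_exchange_split c01 c0C c1C sA sB.
  by exists P, Q.
rewrite (minn_idPr (ltnW CK)) in sB.
have /minn_idPr-> : (#|c0 |: CS| <= K)%N by rewrite card0.
have /minn_idPr-> : (#|c1 |: CS| <= K)%N by rewrite card1.
exists (fun=> c0 |: CS), (fun=> c1 |: CS).
exact: (stable_exchange_full c01 c0C c1C sA sB).
Qed.

End Model.

Theorem proposition2 (R : realType) (D nU nC : nat)
    (u : 'I_nU -> 'I_D -> R) (c : 'I_nC -> 'I_D -> R) (K abar : nat) :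
  (1 <= D)%N -> (0 < K)%N ->
  (forall i d, 0 <= u i d) -> (forall j d, 0 <= c j d) ->
  (forall i, sqnorm (u i) = 1) -> (forall j, sqnorm (c j) = 1) ->
  forall (US : {set 'I_nU}) (c0 c1 : 'I_nC) (CS : {set 'I_nC}),
  c0 != c1 -> c0 \notin CS -> c1 \notin CS ->
  forall v01 v1 v0 v : R,
  f_value K 0 abar u c US (c0 |: (c1 |: CS)) v01 ->
  f_value K 0 abar u c US (c1 |: CS) v1 ->
  f_value K 0 abar u c US (c0 |: CS) v0 ->
  f_value K 0 abar u c US CS v ->
  v01 - v1 <= v0 - v.
Proof.
move=> _ _ u_ge0 c_ge0 _ _ US c0 c1 CS c01 c0C c1C v01 v1 v0 v
  [[A [sA <-]] _] [_ max1] [_ max0] [[B [sB <-]] _].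
have [P [Q [sP sQ le_PQ]]] := stable_exchange u_ge0 c_ge0 c01 c0C c1C sA sB.
by have := max0 P sP; have := max1 Q sQ; lra.
Qed.
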